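(* For any lambda skeleton $p \in \mathrm{SLam}(i)$ and any distinct variable names $x_1,\dots,x_i$, there is a planar lambda term $p^\dagger$ with $[x_i,\dots,x_1]p^\dagger \in \Lambda_1^0(p)$.
   Context: Lambda skeletons: graded sets $\mathrm{SLam}(i)$, $i\in\mathbb{N}$, defined as the least sets such that $\_ \in \mathrm{SLam}(1)$; if $p\in\mathrm{SLam}(j)$ and $q\in\mathrm{SLam}(k)$ then $p(q)\in\mathrm{SLam}(j+k)$; if $p\in\mathrm{SLam}(i+1)$ then $\lambda\_.p\in\mathrm{SLam}(i)$. A pseudo lambda term is a skeleton in which every occurrence of $\_$ is replaced by a variable name. For a list of variable names $\Gamma$ and a pseudo term $t$, the judgment $[\Gamma]t\in\Lambda_1^0(p)$ (''$t$ is a planar lambda term with free variables $\Gamma$ decorating $p$'') is defined by the rules: $[x]x\in\Lambda_1^0(\_)$; if $[\Gamma]t\in\Lambda_1^0(p)$ and $[\Delta]u\in\Lambda_1^0(q)$ then $[\Gamma,\Delta]t(u)\in\Lambda_1^0(p(q))$; if $[x,\Gamma]t\in\Lambda_1^0(p)$ then $[\Gamma]\lambda x.t\in\Lambda_1^0(\lambda\_.p)$. *)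

From Stdlib Require Import List.
Import ListNotations.

Definition var := nat.

Inductive slam : nat -> Type :=
| SHole : slam 1
| SApp : forall j k, slam j -> slam k -> slam (j + k)
| SLam : forall i, slam (S i) -> slam i.

(* Pseudo lambda terms: skeletons whose holes carry variable names
   (binders also carry a name). *)
Inductive pterm : Type :=
| PVar : var -> pterm
| PApp : pterm -> pterm -> pterm
| PLam : var -> pterm -> pterm.

Inductive planar : list var -> pterm -> forall i, slam i -> Prop :=
| planar_var : forall x, planar [x] (PVar x) 1 SHole
| planar_app : forall G D t u j k (p : slam j) (q : slam k),
    planar G t j p -> planar D u k q ->
    planar (G ++ D) (PApp t u) (j + k) (SApp j k p q)
| planar_lam : forall x G t i (p : slam (S i)),
    planar (x :: G) t (S i) p -> planar G (PLam x t) i (SLam i p).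

(* The term p† is built by recursion on the skeleton, threading the context:
   a hole consumes its single variable, an application p(q) with p in SLam(j)
   splits the context into its first j names and the rest, and an abstraction
   pushes a new binder name in front.  The rules of the judgment place no
   freshness condition on names. *)

From Stdlib Require Import List Lia.
Import ListNotations.

Definition fresh_var (G : list var) : var := S (list_max G).

Fixpoint dagger {i} (p : slam i) (G : list var) : pterm :=
  match p with
  | SHole => PVar (hd 0 G)
  | SApp j _ p q => PApp (dagger p (firstn j G)) (dagger q (skipn j G))
  | SLam _ p => PLam (fresh_var G) (dagger p (fresh_var G :: G))
  end.

Lemma planar_dagger i (p : slam i) (G : list var) :
  length G = i -> planar G (dagger p G) i p.
Proof.
  revert G; induction p as [| j k p IHp q IHq | i p IHp]; intros G HG; simpl.
  - destruct G as [|x [|y G]]; try discriminate.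
    constructor.
  - pattern G at 1; rewrite <- (firstn_skipn j G).
    constructor.
    + apply IHp; rewrite length_firstn; lia.
    + apply IHq; rewrite length_skipn; lia.
  - constructor; apply IHp; simpl; lia.
Qed.

(* xs = [x_1; ...; x_i]; the context [x_i, ..., x_1] is rev xs. *)
Theorem proposition2p5 :
  forall (i : nat) (p : slam i) (xs : list var),
    length xs = i -> NoDup xs ->
    exists t : pterm, planar (rev xs) t i p.
Proof.
  intros i p xs Hlen _.
  exists (dagger p (rev xs)).
  apply planar_dagger; rewrite length_rev; exact Hlen.
Qed.
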